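(* Fix a $C^0$-concept over a topologized field $\mathbb{K}$. Let $E_1,E_2,F\in\mathcal{M}$, $U\subseteq E_1\times E_2$ open, and $f\colon U\to F$ a $C^0$-map. Let $U_1:=\{(x_1,x_2,v_1,t)\in U\times E_1\times\mathbb{K}:(x_1+tv_1,x_2)\in U\}$ and $U_2:=\{(x_1,x_2,v_2,t)\in U\times E_2\times\mathbb{K}:(x_1,x_2+tv_2)\in U\}$. Suppose there are $C^0$-maps $\frac{\Delta_1f}{\Delta_1}\colon U_1\to F$ and $\frac{\Delta_2f}{\Delta_2}\colon U_2\to F$ such that $\frac{\Delta_1f}{\Delta_1}(x_1,x_2,v_1,t)=\frac{f(x_1+tv_1,x_2)-f(x_1,x_2)}{t}$ for all $(x_1,x_2,v_1,t)\in U_1$ with $t\ne0$, and $\frac{\Delta_2f}{\Delta_2}(x_1,x_2,v_2,t)=\frac{f(x_1,x_2+tv_2)-f(x_1,x_2)}{t}$ for all $(x_1,x_2,v_2,t)\in U_2$ with $t\ne0$. Then $f$ is of class $C^1$ and $$f^{[1]}((x_1,x_2),(v_1,v_2),t)=\frac{\Delta_1f}{\Delta_1}(x_1,x_2,v_1,t)+\frac{\Delta_2f}{\Delta_2}(x_1+tv_1,x_2,v_2,t)$$ for all $(x_1,x_2,v_1,v_2,t)$ in $P:=\{((x_1,x_2),(v_1,v_2),t)\in U^{[1]}:(x_1+tv_1,x_2)\in U\}$.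
   Context: Let $\mathbb{K}$ be a commutative ring with unit (here a field) carrying a topology. A $C^0$-concept over $\mathbb{K}$ consists of: (a) a class $\mathcal{M}$ of topologized $\mathbb{K}$-modules with $\mathbb{K}\in\mathcal{M}$; (b) for $E,F\in\mathcal{M}$ and open $U\subseteq E$, a set $C^0(U,F)$ of continuous maps; (c) for $E_1,E_2\in\mathcal{M}$ a topology on $E_1\times E_2$ (not necessarily the product topology) making it a member of $\mathcal{M}$; subject to: (I.1) composites of $C^0$-maps are $C^0$, identities and inclusions of open subsets are $C^0$; (I.2) $x\mapsto rx+b$ is $C^0$; (I.3) $t\mapsto tv+x$ is $C^0$; (I.4) $\mathbb{K}^\times$ is open and inversion is $C^0$; (I.5) $C^0$ is local on open covers; (II.1) projections and $v\mapsto(v,y)$, $w\mapsto(x,w)$ are $C^0$; (II.2) $f_1\times f_2$ is $C^0$ for $C^0$-maps $f_i$; (II.3) diagonals are $C^0$; (II.4) exchange/associativity maps of products are $C^0$ both ways; (II.5) addition and scalar multiplication are $C^0$; (III) a $C^0$-map on open $U\subseteq\mathbb{K}$ is determined by its values on $U\cap\mathbb{K}^\times$. For open $U\subseteq E$, $U^{[1]}=\{(x,v,t)\in U\times E\times\mathbb{K}:x+tv\in U\}$; a $C^0$-map $f$ is $C^1$ if there is a $C^0$-map $f^{[1]}\colon U^{[1]}\to F$ with $f(x+tv)-f(x)=t\,f^{[1]}(x,v,t)$ on $U^{[1]}$. Here $E=E_1\times E_2$ and points of $U^{[1]}$ are written $((x_1,x_2),(v_1,v_2),t)$. *)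

From mathcomp Require Import all_boot all_algebra.
Set Implicit Arguments. Unset Strict Implicit. Unset Printing Implicit Defensive.
Import GRing.Theory.
Local Open Scope ring_scope.

Definition set (T : Type) := T -> Prop.
Definition setT {T : Type} : set T := fun _ => True.

Definition is_topology (T : Type) (O : set (set T)) : Prop :=
  [/\ O setT, O (fun _ => False),
      (forall (I : Type) (A : I -> set T), (forall i, O (A i)) ->
          O (fun x => exists i, A i x))
    & (forall A B, O A -> O B -> O (fun x => A x /\ B x))].

(* f (defined on the open set U of E) is continuous into F: preimages of
   open sets of F under f|U are open (in E, equivalently in U). *)
Definition cont_on (S T : Type) (OS : set (set S)) (OT : set (set T))
    (U : set S) (f : S -> T) : Prop :=
  forall V, OT V -> OS (fun x => U x /\ V (f x)).

Record tmod (K : fieldType) := TMod { tcar :> lmodType K ; topen : set (set tcar) }.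
Arguments topen {K} t _.

Definition Ktm (K : fieldType) (OK : set (set K)) : tmod K := @TMod K K^o OK.

(* The type of the "product topology" datum (c): for E1, E2 a topology on E1 x E2
   (not necessarily the product topology). *)
Definition prodtop_t (K : fieldType) :=
  forall E1 E2 : tmod K, set (set (tcar E1 * tcar E2)%type).

Definition tprod (K : fieldType) (pt : prodtop_t K) (E1 E2 : tmod K) : tmod K :=
  @TMod K (tcar E1 * tcar E2)%type (pt E1 E2).

(* Datum (b): C0 E F U f means "f, restricted to the open set U of E, belongs to
   C^0(U,F)".  Maps U -> F are represented by total functions E -> F, only their
   values on U matter (axiom c0_ext). *)
Definition C0_t (K : fieldType) :=
  forall E F : tmod K, set (tcar E) -> (tcar E -> tcar F) -> Prop.

Record is_C0_concept (K : fieldType) (OK : set (set K)) (inM : tmod K -> Prop)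
    (pt : prodtop_t K) (C0 : C0_t K) : Prop := {
  c0_topK : is_topology OK;
  c0_inMK : inM (Ktm OK);
  c0_inMprod : forall E1 E2, inM E1 -> inM E2 -> inM (tprod pt E1 E2);
  c0_top : forall E, inM E -> is_topology (topen E);
  c0_dom : forall E F U f, C0 E F U f ->
     [/\ inM E, inM F, topen E U & cont_on (topen E) (topen F) U f];
  c0_ext : forall E F U f g, C0 E F U f -> (forall x, U x -> f x = g x) ->
     C0 E F U g;
  c0_comp : forall E F G U V (f : tcar E -> tcar F) (g : tcar F -> tcar G),
     C0 E F U f -> C0 F G V g -> (forall x, U x -> V (f x)) ->
     C0 E G U (fun x => g (f x));
  c0_id : forall E U, inM E -> topen E U -> C0 E E U (fun x => x);
  c0_affine : forall E (r : K) (b : tcar E), inM E ->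
     C0 E E setT (fun x => r *: x + b);
  c0_line : forall E (x v : tcar E), inM E ->
     C0 (Ktm OK) E setT (fun t : K => t *: v + x);
  c0_units_open : OK (fun t : K => t != 0);
  c0_inv : C0 (Ktm OK) (Ktm OK) (fun t : K => t != 0) (fun t : K => t^-1);
  c0_local : forall E F (U : set (tcar E)) (f : tcar E -> tcar F)
       (I : Type) (Ui : I -> set (tcar E)),
     inM E -> inM F -> (forall i, topen E (Ui i)) ->
     (forall x, U x <-> exists i, Ui i x) ->
     (forall i, C0 E F (Ui i) f) -> C0 E F U f;
  c0_fst : forall E1 E2, inM E1 -> inM E2 ->
     C0 (tprod pt E1 E2) E1 setT (fun p => p.1);
  c0_snd : forall E1 E2, inM E1 -> inM E2 ->
     C0 (tprod pt E1 E2) E2 setT (fun p => p.2);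
  c0_inl : forall E1 E2 (y : tcar E2), inM E1 -> inM E2 ->
     C0 E1 (tprod pt E1 E2) setT (fun v => (v, y));
  c0_inr : forall E1 E2 (x : tcar E1), inM E1 -> inM E2 ->
     C0 E2 (tprod pt E1 E2) setT (fun w => (x, w));
  c0_prodmap : forall E1 E2 F1 F2 U1 U2
       (f1 : tcar E1 -> tcar F1) (f2 : tcar E2 -> tcar F2),
     C0 E1 F1 U1 f1 -> C0 E2 F2 U2 f2 ->
     C0 (tprod pt E1 E2) (tprod pt F1 F2) (fun p => U1 p.1 /\ U2 p.2)
        (fun p => (f1 p.1, f2 p.2));
  c0_diag : forall E, inM E -> C0 E (tprod pt E E) setT (fun x => (x, x));
  c0_swap : forall E1 E2, inM E1 -> inM E2 ->
     C0 (tprod pt E1 E2) (tprod pt E2 E1) setT (fun p => (p.2, p.1));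
  c0_assoc : forall E1 E2 E3, inM E1 -> inM E2 -> inM E3 ->
     C0 (tprod pt (tprod pt E1 E2) E3) (tprod pt E1 (tprod pt E2 E3)) setT
        (fun p => (p.1.1, (p.1.2, p.2)));
  c0_assocV : forall E1 E2 E3, inM E1 -> inM E2 -> inM E3 ->
     C0 (tprod pt E1 (tprod pt E2 E3)) (tprod pt (tprod pt E1 E2) E3) setT
        (fun p => ((p.1, p.2.1), p.2.2));
  c0_add : forall E, inM E -> C0 (tprod pt E E) E setT (fun p => p.1 + p.2);
  c0_scale : forall E, inM E ->
     C0 (tprod pt (Ktm OK) E) E setT (fun p => p.1 *: p.2);
  c0_det : forall F (U : set K) (f g : K -> tcar F),
     C0 (Ktm OK) F U f -> C0 (Ktm OK) F U g ->
     (forall t, U t -> t != 0 -> f t = g t) -> forall t, U t -> f t = g t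
}.

Definition U1 (K : fieldType) (E : lmodType K) (U : set E) : set ((E * E) * K)%type :=
  fun p => U p.1.1 /\ U (p.1.1 + p.2 *: p.1.2).

Definition is_f1 (K : fieldType) (OK : set (set K)) (pt : prodtop_t K)
    (C0 : C0_t K) (E F : tmod K) (U : set (tcar E))
    (f : tcar E -> tcar F) (f1 : ((tcar E * tcar E) * K)%type -> tcar F) : Prop :=
  C0 (tprod pt (tprod pt E E) (Ktm OK)) F (U1 U) f1 /\
  forall (x v : tcar E) (t : K), U1 U ((x, v), t) ->
    f (x + t *: v) - f x = t *: f1 ((x, v), t).

Definition isC1 (K : fieldType) (OK : set (set K)) (pt : prodtop_t K)
    (C0 : C0_t K) (E F : tmod K) (U : set (tcar E)) (f : tcar E -> tcar F) : Prop :=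
  C0 E F U f /\ exists f1, is_f1 OK pt C0 U f f1.

(* On the points of U^[1] with t <> 0 the sum
   D1(x1, x2, v1, t) + D2(x1 + t v1, x2, v2, t) telescopes, along the path
   x -> (x1 + t v1, x2) -> x + t v, to the difference quotient of f.  This sum is
   C^0 on the open set P, which contains every point of U^[1] with t = 0, so gluing
   it with the difference quotient on {t <> 0} (axiom I.5) yields f^[1].  Any two
   C^0 maps that agree with the difference quotient for t <> 0 coincide on each
   line s |-> (x, v, s) by axiom (III), whence the formula for f^[1] on P. *)
From Pilot Require Import Defs.
From mathcomp Require Import all_boot all_algebra.
From Stdlib Require Import FunctionalExtensionality PropExtensionality ClassicalDescription.
Import GRing.Theory.
Local Open Scope ring_scope.

Lemma set_ext {T : Type} {A B : set T} : (forall x, A x <-> B x) -> A = B.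
Proof.
by move=> AB; apply: functional_extensionality => x; apply: propositional_extensionality.
Qed.

Definition diffq {K : fieldType} {E F : lmodType K} (f : E -> F)
    (p : ((E * E) * K)%type) : F :=
  p.2^-1 *: (f (p.1.1 + p.2 *: p.1.2) - f p.1.1).

Definition is_diffq_on {K : fieldType} {E F : lmodType K}
    (W : set ((E * E) * K)%type) (f : E -> F) (g : ((E * E) * K)%type -> F) :=
  forall x v t, W ((x, v), t) -> t != 0 -> f (x + t *: v) - f x = t *: g ((x, v), t).

Lemma diffqP {K : fieldType} {E F : lmodType K} (f : E -> F) :
  is_diffq_on Defs.setT f (diffq f).
Proof. by move=> x v t _ t0; rewrite /diffq scalerA mulfV ?scale1r. Qed.

Section C0Calculus.
Context {K : fieldType} {OK : set (set K)} {inM : tmod K -> Prop}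
  {pt : prodtop_t K} {C0 : C0_t K} (HC : is_C0_concept OK inM pt C0).

Lemma c0_open {E F U f} : C0 E F U f -> topen E U.
Proof. by case/(c0_dom HC). Qed.

Lemma c0_restrict {E F U W f} :
  C0 E F U f -> topen E W -> (forall x, W x -> U x) -> C0 E F W f.
Proof.
move=> Hf HW WU; have [HE _ _ _] := c0_dom HC Hf.
exact: (c0_comp HC (c0_id HC HE HW) Hf WU).
Qed.

Lemma open_setI {E} {A B : set (tcar E)} :
  inM E -> topen E A -> topen E B -> topen E (fun x => A x /\ B x).
Proof. by move=> HE HA HB; case: (c0_top HC HE) => _ _ _; apply. Qed.

Lemma open_preimage {E F} {phi : tcar E -> tcar F} {V} :
  C0 E F Defs.setT phi -> topen F V -> topen E (fun x => V (phi x)).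
Proof.
move=> Hphi HV; have [_ _ _ Hcont] := c0_dom HC Hphi.
have <- : (fun x => Defs.setT x /\ V (phi x)) = (fun x => V (phi x)).
  by apply: set_ext => x; split=> [[]|].
exact: Hcont.
Qed.

Lemma c0_compT {E F G} {phi : tcar E -> tcar F} {g : tcar F -> tcar G} :
  C0 E F Defs.setT phi -> C0 F G Defs.setT g -> C0 E G Defs.setT (fun x => g (phi x)).
Proof. by move=> Hphi Hg; apply: (c0_comp HC Hphi Hg). Qed.

Lemma c0_comp_on {E F G} {phi : tcar E -> tcar F} {V} {g : tcar F -> tcar G} {W} :
  C0 E F Defs.setT phi -> C0 F G V g -> topen E W -> (forall x, W x -> V (phi x)) ->
  C0 E G W (fun x => g (phi x)).
Proof. by move=> Hphi Hg HW; apply: (c0_comp HC (c0_restrict Hphi HW _) Hg). Qed.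

Lemma c0_pair {E A B U} {f : tcar E -> tcar A} {g : tcar E -> tcar B} :
  C0 E A U f -> C0 E B U g -> C0 E (tprod pt A B) U (fun x => (f x, g x)).
Proof.
move=> Hf Hg; have [HE _ HU _] := c0_dom HC Hf.
exact: (c0_comp HC (c0_restrict (c0_diag HC HE) HU (fun _ _ => I)) (c0_prodmap HC Hf Hg)
  (fun _ Ux => conj Ux Ux)).
Qed.

Lemma c0D {E F U} {f g : tcar E -> tcar F} :
  C0 E F U f -> C0 E F U g -> C0 E F U (fun x => f x + g x).
Proof.
move=> Hf Hg; have [_ HF _ _] := c0_dom HC Hf.
exact: (c0_comp HC (c0_pair Hf Hg) (c0_add HC HF) (fun _ _ => I)).
Qed.

Lemma c0Z {E F U} {s : tcar E -> K} {f : tcar E -> tcar F} :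
  C0 E (Ktm OK) U s -> C0 E F U f -> C0 E F U (fun x => s x *: f x).
Proof.
move=> Hs Hf; have [_ HF _ _] := c0_dom HC Hf.
exact: (c0_comp HC (c0_pair Hs Hf) (c0_scale HC HF) (fun _ _ => I)).
Qed.

Lemma c0B {E F U} {f g : tcar E -> tcar F} :
  C0 E F U f -> C0 E F U g -> C0 E F U (fun x => f x - g x).
Proof.
move=> Hf Hg; have [_ HF _ _] := c0_dom HC Hf.
have Hopp := c0_comp HC Hg (c0_affine HC (-1) 0 HF) (fun _ _ => I).
by apply: (c0_ext HC (c0D Hf Hopp)) => x _ /=; rewrite addr0 scaleN1r.
Qed.

Lemma c0_glue {E F A B} {g h : tcar E -> tcar F} :
  C0 E F A g -> C0 E F B h -> (forall x, A x -> B x -> g x = h x) ->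
  C0 E F (fun x => A x \/ B x)
    (fun x => if excluded_middle_informative (A x) then g x else h x).
Proof.
move=> Hg Hh gh; have [HE HF HA _] := c0_dom HC Hg; have [_ _ HB _] := c0_dom HC Hh.
apply: (c0_local HC (I := bool) (Ui := fun b => if b then A else B)) => //.
- by case.
- by move=> x; split=> [[Ax|Bx]|[[] ?]]; [exists true|exists false|left|right].
- case.
  + by apply: (c0_ext HC Hg) => x Ax; case: excluded_middle_informative.
  + apply: (c0_ext HC Hh) => x Bx.
    by case: excluded_middle_informative => // Ax; rewrite gh.
Qed.

Section DifferenceQuotient.
Context {E F : tmod K} (HE : inM E).
Local Notation EEK := (tprod pt (tprod pt E E) (Ktm OK)).

Lemma inM_EE : inM (tprod pt E E).
Proof. exact: (c0_inMprod HC HE HE). Qed.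

Lemma inM_EEK : inM EEK.
Proof. exact: (c0_inMprod HC inM_EE (c0_inMK HC)). Qed.

Lemma c0_base : C0 EEK E Defs.setT (fun p => p.1.1).
Proof. exact: c0_compT (c0_fst HC inM_EE (c0_inMK HC)) (c0_fst HC HE HE). Qed.

Lemma c0_dir : C0 EEK E Defs.setT (fun p => p.1.2).
Proof. exact: c0_compT (c0_fst HC inM_EE (c0_inMK HC)) (c0_snd HC HE HE). Qed.

Lemma c0_param : C0 EEK (Ktm OK) Defs.setT (fun p => p.2).
Proof. exact: (c0_snd HC inM_EE (c0_inMK HC)). Qed.

Lemma c0_diffq {U} {f : tcar E -> tcar F} :
  C0 E F U f -> C0 EEK F (fun p => U1 U p /\ p.2 != 0) (diffq f).
Proof.
move=> Hf; have HU := c0_open Hf.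
have Hend := c0D c0_base (c0Z c0_param c0_dir).
have HW : topen EEK (fun p => U1 U p /\ p.2 != 0).
  apply: open_setI inM_EEK _ (open_preimage c0_param (c0_units_open HC)).
  exact: open_setI inM_EEK (open_preimage c0_base HU) (open_preimage Hend HU).
apply: c0Z; first by apply: c0_comp_on c0_param (c0_inv HC) HW _ => p [].
apply: c0B; first by apply: c0_comp_on Hend Hf HW _ => p [[]].
by apply: c0_comp_on c0_base Hf HW _ => p [[]].
Qed.

Lemma diffq_on_unique {W} {f : tcar E -> tcar F} {g h} :
  C0 EEK F W g -> C0 EEK F W h -> is_diffq_on W f g -> is_diffq_on W f h ->
  forall p, W p -> g p = h p.
Proof.
move=> Hg Hh dg dh [[x v] t] Wp.
have Hline : C0 (Ktm OK) EEK Defs.setT (fun s => ((x, v), s)).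
  exact: (c0_inr HC (E1 := tprod pt E E) (x, v) inM_EE (c0_inMK HC)).
have HS := open_preimage Hline (c0_open Hg).
apply: (c0_det HC (U := fun s => W ((x, v), s)) (f := fun s => g ((x, v), s))
  (g := fun s => h ((x, v), s))) => //.
- exact: c0_comp_on Hline Hg HS _.
- exact: c0_comp_on Hline Hh HS _.
- by move=> s Ws s0; apply: (scalerI s0); rewrite -dg // -dh.
Qed.

Lemma isC1_of_diffq_on {U} {f : tcar E -> tcar F} {W g} :
  C0 E F U f -> C0 EEK F W g -> (forall p, W p -> U1 U p) ->
  (forall x v, U x -> W ((x, v), 0)) -> is_diffq_on W f g ->
  isC1 OK pt C0 U f.
Proof.
move=> Hf Hg WU1 W0 dg; split=> //.
exists (fun p => if excluded_middle_informative (W p) then g p else diffq f p); split.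
  have -> : U1 U = fun p => W p \/ (U1 U p /\ p.2 != 0).
    apply: set_ext => -[[x v] t]; split=> [Hp|[/WU1 //|[] //]].
    by case: (eqVneq t 0) => [t0|]; [left; rewrite t0; apply: W0; case: Hp | right].
  apply: c0_glue Hg (c0_diffq Hf) _ => -[[x v] t] Wp [_ t0].
  by apply: (scalerI t0); rewrite -dg // -diffqP.
move=> x v t _; case: (eqVneq t 0) => [->|t0].
  by rewrite scale0r addr0 subrr scale0r.
by case: excluded_middle_informative => Wp; [apply: dg | apply: diffqP].
Qed.

End DifferenceQuotient.

Section CornerQuotient.
Context {E1 E2 F : tmod K} (HE1 : inM E1) (HE2 : inM E2).
Context {U : set (tcar E1 * tcar E2)%type}.
Context {f : (tcar E1 * tcar E2)%type -> tcar F}.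
Context {D1 : (((tcar E1 * tcar E2) * tcar E1) * K)%type -> tcar F}.
Context {D2 : (((tcar E1 * tcar E2) * tcar E2) * K)%type -> tcar F}.
Local Notation E := (tprod pt E1 E2).
Local Notation EEK := (tprod pt (tprod pt E E) (Ktm OK)).

Definition corner (p : ((tcar E1 * tcar E2) * (tcar E1 * tcar E2)) * K) :=
  (p.1.1.1 + p.2 *: p.1.2.1, p.1.1.2).

Definition corner_dom p := U1 U p /\ U (corner p).

Definition corner_quotient p :=
  D1 ((p.1.1, p.1.2.1), p.2) + D2 ((corner p, p.1.2.2), p.2).

Lemma c0_corner_quotient :
  C0 (tprod pt (tprod pt E E1) (Ktm OK)) F
    (fun p => U p.1.1 /\ U (p.1.1.1 + p.2 *: p.1.2, p.1.1.2)) D1 ->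
  C0 (tprod pt (tprod pt E E2) (Ktm OK)) F
    (fun p => U p.1.1 /\ U (p.1.1.1, p.1.1.2 + p.2 *: p.1.2)) D2 ->
  C0 EEK F corner_dom corner_quotient.
Proof.
move=> HD1 HD2; have HE : inM E := c0_inMprod HC HE1 HE2.
have Hx := c0_base HE; have Hv := c0_dir HE; have Ht := c0_param HE.
have Hx1 := c0_compT Hx (c0_fst HC HE1 HE2).
have Hx2 := c0_compT Hx (c0_snd HC HE1 HE2).
have Hv1 := c0_compT Hv (c0_fst HC HE1 HE2).
have Hv2 := c0_compT Hv (c0_snd HC HE1 HE2).
have Hcorner := c0_pair (c0D Hx1 (c0Z Ht Hv1)) Hx2.
have Harg1 := c0_pair (c0_pair Hx Hv1) Ht.
have Harg2 := c0_pair (c0_pair Hcorner Hv2) Ht.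
have Hdom : topen EEK corner_dom.
  rewrite -(set_ext (B := corner_dom) (A := fun p => (U p.1.1 /\ U (corner p)) /\
      (U (corner p) /\ U ((corner p).1, (corner p).2 + p.2 *: p.1.2.2)))).
    exact: open_setI (inM_EEK HE) (open_preimage Harg1 (c0_open HD1))
      (open_preimage Harg2 (c0_open HD2)).
  by move=> [[[x1 x2] [v1 v2]] t]; split=> [[[? ?] [_ ?]] | [[? ?] ?]].
apply: c0D.
  by apply: c0_comp_on Harg1 HD1 Hdom _ => p [[]].
by apply: c0_comp_on Harg2 HD2 Hdom _ => -[[[x1 x2] [v1 v2]] t] [[]].
Qed.

Lemma corner_quotient_is_diffq :
  (forall x1 x2 v1 t, U (x1, x2) -> U (x1 + t *: v1, x2) -> t != 0 ->
     D1 (((x1, x2), v1), t) = t^-1 *: (f (x1 + t *: v1, x2) - f (x1, x2))) ->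
  (forall x1 x2 v2 t, U (x1, x2) -> U (x1, x2 + t *: v2) -> t != 0 ->
     D2 (((x1, x2), v2), t) = t^-1 *: (f (x1, x2 + t *: v2) - f (x1, x2))) ->
  is_diffq_on corner_dom f corner_quotient.
Proof.
move=> HD1eq HD2eq [x1 x2] [v1 v2] t [[Ux Uxtv] Uc] t0.
rewrite /corner_quotient /corner /= in Uc *.
rewrite scalerDr HD1eq // HD2eq // !scalerA mulfV // !scale1r.
by rewrite [RHS]addrC addrA subrK.
Qed.

End CornerQuotient.

End C0Calculus.

Theorem lemma3p9 (K : fieldType) (OK : set (set K)) (inM : tmod K -> Prop)
    (pt : prodtop_t K) (C0 : C0_t K) (HC : is_C0_concept OK inM pt C0)
    (E1 E2 F : tmod K) (HE1 : inM E1) (HE2 : inM E2) (HF : inM F)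
    (U : set (tcar E1 * tcar E2)%type) (HU : topen (tprod pt E1 E2) U)
    (f : (tcar E1 * tcar E2)%type -> tcar F)
    (Hf : C0 (tprod pt E1 E2) F U f)
    (D1 : (((tcar E1 * tcar E2) * tcar E1) * K)%type -> tcar F)
    (D2 : (((tcar E1 * tcar E2) * tcar E2) * K)%type -> tcar F)
    (HD1 : C0 (tprod pt (tprod pt (tprod pt E1 E2) E1) (Ktm OK)) F
              (fun p => U p.1.1 /\ U (p.1.1.1 + p.2 *: p.1.2, p.1.1.2)) D1)
    (HD2 : C0 (tprod pt (tprod pt (tprod pt E1 E2) E2) (Ktm OK)) F
              (fun p => U p.1.1 /\ U (p.1.1.1, p.1.1.2 + p.2 *: p.1.2)) D2)
    (HD1eq : forall (x1 : tcar E1) (x2 : tcar E2) (v1 : tcar E1) (t : K),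
        U (x1, x2) -> U (x1 + t *: v1, x2) -> t != 0 ->
        D1 (((x1, x2), v1), t) = t^-1 *: (f (x1 + t *: v1, x2) - f (x1, x2)))
    (HD2eq : forall (x1 : tcar E1) (x2 : tcar E2) (v2 : tcar E2) (t : K),
        U (x1, x2) -> U (x1, x2 + t *: v2) -> t != 0 ->
        D2 (((x1, x2), v2), t) = t^-1 *: (f (x1, x2 + t *: v2) - f (x1, x2))) :
  isC1 OK pt C0 (E := tprod pt E1 E2) U f /\
  forall f1 : (((tcar E1 * tcar E2) * (tcar E1 * tcar E2)) * K)%type -> tcar F,
    is_f1 OK pt C0 (E := tprod pt E1 E2) U f f1 ->
    forall (x1 v1 : tcar E1) (x2 v2 : tcar E2) (t : K),
      U1 (E := tcar E1 * tcar E2)%type U (((x1, x2), (v1, v2)), t) ->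
      U (x1 + t *: v1, x2) ->
      f1 (((x1, x2), (v1, v2)), t)
        = D1 (((x1, x2), v1), t) + D2 (((x1 + t *: v1, x2), v2), t).
Proof.
have HE : inM (tprod pt E1 E2) := c0_inMprod HC HE1 HE2.
have Hg := c0_corner_quotient HC HE1 HE2 HD1 HD2.
have dg := corner_quotient_is_diffq HD1eq HD2eq.
have dom_U1 p : corner_dom (U := U) p -> U1 U p by case.
split.
  apply: (isC1_of_diffq_on HC HE Hf Hg dom_U1 _ dg) => -[x1 x2] v Ux.
  by rewrite /corner_dom /U1 /corner /= !scale0r !addr0.
move=> f1 [Hf1 df1] x1 v1 x2 v2 t HU1 Hc.
have Hf1P := c0_restrict HC Hf1 (c0_open HC Hg) dom_U1.
apply: (diffq_on_unique HC HE Hf1P Hg _ dg (((x1, x2), (v1, v2)), t)) => //.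
by move=> x v s Hp _; apply: df1; case: Hp.
Qed.
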